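(* Let $G$ be a finite $p$-group and let $H, C_1, C_2$ be normal subgroups of $G$ such that $C_1\neq C_2$, $C_1,C_2\subseteq H$, and $|H:C_1|=|H:C_2|=p$. Then every subgroup $C$ of $H$ with $C_1\cap C_2\subseteq C$ is a normal subgroup of $G$. *)

From mathcomp Require Import all_boot all_fingroup all_solvable.
Set Implicit Arguments.
Unset Strict Implicit.
Unset Printing Implicit Defensive.

From mathcomp Require Import all_boot all_fingroup all_solvable.
Local Open Scope group_scope.

(** In a nilpotent group every minimal normal subgroup is central, so a normal
    section [H/K] of prime order is central in [G/K], i.e. [[H, G] \subset K].
    Hence [[H, G]] lies in [C1 :&: C2], and every subgroup of [H] above
    [[H, G]] is normalised by [G]. *)

Lemma commg_sub_prime_index (gT : finGroupType) (G H K : {group gT}) :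
  nilpotent G -> H <| G -> K <| G -> K \subset H -> prime #|H : K| ->
  [~: H, G] \subset K.
Proof.
move=> nilG nsHG nsKG sKH prHK.
have nKG := normal_norm nsKG.
have nKH : H \subset 'N(K) by apply: subset_trans (normal_sub nsHG) nKG.
rewrite -quotient_cents2 //.
have prHq : prime #|H / K| by rewrite card_quotient.
have HqZ : H / K \subset 'Z(G / K).
  apply: prime_meetG => //; apply: meet_center_nil.
  - exact: quotient_nil.
  - exact: quotient_normal.
  - by rewrite -cardG_gt1 prime_gt1.
exact: subset_trans HqZ (subsetIr _ _).
Qed.

Lemma normal_commg_sub (gT : finGroupType) (G H C : {group gT}) :
  H \subset G -> C \subset H -> [~: H, G] \subset C -> C <| G.
Proof.
move=> sHG sCH sHGC.
rewrite /normal (subset_trans sCH sHG) -commg_subr commGC.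
exact: subset_trans (commgSS sCH (subxx G)) sHGC.
Qed.

Theorem lemma3 (gT : finGroupType) (p : nat) (G H C1 C2 : {group gT})
  (pr_p : prime p) (pG : p.-group G)
  (nHG : H <| G) (nC1G : C1 <| G) (nC2G : C2 <| G)
  (neqC : C1 :!=: C2) (sC1H : C1 \subset H) (sC2H : C2 \subset H)
  (iC1 : #|H : C1| = p) (iC2 : #|H : C2| = p) :
  forall C : {group gT}, C \subset H -> C1 :&: C2 \subset C -> C <| G.
Proof.
move=> C sCH sDC.
have nilG : nilpotent G := pgroup_nil pG.
have sHGC1 : [~: H, G] \subset C1.
  by apply: commg_sub_prime_index; rewrite ?iC1.
have sHGC2 : [~: H, G] \subset C2.
  by apply: commg_sub_prime_index; rewrite ?iC2.
apply: normal_commg_sub (normal_sub nHG) sCH _.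
by apply: subset_trans sDC; rewrite subsetI sHGC1.
Qed.
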